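(* Let $H=(V,E)$ be a finite hypergraph with edge set $E=\{e_1,\dots,e_m\}$ ($m\ge 1$), where every edge has at least two vertices and $V=e_1\cup\cdots\cup e_m$. Let $e_m^- := e_m\setminus(e_1\cup\cdots\cup e_{m-1})$ and assume $|e_m^-|\ge 2$. Assume moreover: 1. if $|V|\equiv 0 \pmod 4$, then $m\equiv 1\pmod 4$; 2. if $|V|\equiv 2\pmod 4$, then $m\not\equiv 0\pmod 4$; 3. if $|V|\equiv 3\pmod 4$ and $|e_m^-|=2$, then $m\not\equiv 0\pmod 4$. Let $H^-$ be the hypergraph with vertex set $V\setminus e_m^-$ and edge set $\{e_1,\dots,e_{m-1}\}$. If $H^-$ is $\mathbb{Z}_2\times\mathbb{Z}_2$-cordial, then $H$ is $\mathbb{Z}_2\times\mathbb{Z}_2$-cordial.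
   Context: Let $A=\mathbb{Z}_2\times\mathbb{Z}_2$ (the Klein four-group). For a hypergraph $H=(V,E)$ (edges are non-empty subsets of $V$) and a labeling $c:V\to A$, write $v_c(a)=|c^{-1}(a)|$. The labeling $c$ is $A$-friendly if $|v_c(a)-v_c(b)|\le 1$ for all $a,b\in A$. It induces the edge labeling $c^*:E\to A$, $c^*(e)=\sum_{v\in e}c(v)$; write $e_{c^*}(a)=|(c^* )^{-1}(a)|$. The hypergraph $H$ is $A$-cordial if it admits an $A$-friendly labeling $c$ such that $|e_{c^*}(a)-e_{c^*}(b)|\le 1$ for all $a,b\in A$. *)

From HB Require Import structures.
From mathcomp Require Import all_boot all_order all_algebra.
Set Implicit Arguments. Unset Strict Implicit. Unset Printing Implicit Defensive.
Import GRing.Theory.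

Definition klein := ('Z_2 * 'Z_2)%type.

(* A hypergraph is given by a vertex set V : {set T} and a list of edges
   E : seq {set T} (edges are subsets of V). *)

Definition vcount (T : finType) (V : {set T}) (c : T -> klein) (a : klein) : nat :=
  #|[set v in V | c v == a]|.

Definition elabel (T : finType) (c : T -> klein) (e : {set T}) : klein :=
  (\sum_(v in e) c v)%R.

Definition ecount (T : finType) (E : seq {set T}) (c : T -> klein) (a : klein) : nat :=
  count (fun e => elabel c e == a) E.

Definition friendly (T : finType) (V : {set T}) (c : T -> klein) : Prop :=
  forall a b : klein, vcount V c a <= vcount V c b + 1.

Definition cordial (T : finType) (V : {set T}) (E : seq {set T}) : Prop :=
  exists c : T -> klein, friendly V c /\
    (forall a b : klein, ecount E c a <= ecount E c b + 1).

From HB Require Import structures.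
From mathcomp Require Import all_boot all_order all_algebra.
From mathcomp Require Import zify.
Import GRing.Theory.

Set Implicit Arguments.
Unset Strict Implicit.
Unset Printing Implicit Defensive.

(* Start from a cordial labeling of H^-: only the k = |e_m^-| >= 2 new vertices
   remain to be labeled, and their labels w only change the vertex counts and
   the label s + sum(w) of e_m.  Subtracting the minimum from the vertex and
   edge counts leaves 0/1 functions, and appending one copy of each element of
   Z_2 x Z_2 to w keeps both balances and sum(w), so k reduces to 2 <= k <= 6.
   There, the sums of balanced completions w take 1, 4, 3 or 4 values as
   |V| = 0, 1, 2, 3 (mod 4) (only 3 values if |V| = 3 and k = 2), while the
   minimal edge counts are attained at 4 labels if m = 1, at 1 if m = 0 and at
   2 or more otherwise (mod 4).  The hypotheses make these numbers add up to
   more than 4, so some s + sum(w) is a minimal edge label.  For 2 <= k <= 6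
   the existence of such a completion is checked by computation. *)

Definition words (T : Type) (xs : seq T) (n : nat) : seq (seq T) :=
  iter n (fun ws => [seq x :: w | x <- xs, w <- ws]) [:: [::]].

Lemma mem_words (T : eqType) (xs : seq T) (n : nat) (w : seq T) :
  (w \in words xs n) = (size w == n) && all (mem xs) w.
Proof.
elim: n w => [|n IHn] [|x w] //=.
  by apply/negbTE/allpairsPdep => -[y [w' [_ _]]].
rewrite eqSS; apply/allpairsPdep/and3P.
  by case=> y [w' [xs_y]]; rewrite IHn => /andP[size_w' all_w'] [-> ->].
by case=> size_w xs_x all_w; exists x, w; rewrite IHn size_w all_w.
Qed.

(* One word per multiset of size n over a duplicate-free xs. *)
Fixpoint multisets (T : Type) (xs : seq T) (n : nat) : seq (seq T) :=
  if xs is x :: xs' then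
    [seq nseq i x ++ w | i <- iota 0 n.+1, w <- multisets xs' (n - i)]
  else if n is 0 then [:: [::]] else [::].

Lemma multisets_size (T : eqType) (xs : seq T) (n : nat) (w : seq T) :
  w \in multisets xs n -> size w = n.
Proof.
elim: xs n w => [|x xs IHxs] n w.
  by case: n => [|n]; rewrite ?inE // => /eqP ->.
case/allpairsPdep => i [w' [i_le /IHxs size_w' ->]].
by rewrite size_cat size_nseq size_w'; move: i_le; rewrite mem_iota; lia.
Qed.

Lemma sum_eq_indicator (I : finType) (x : I) : \sum_i (x == i) = 1.
Proof. by rewrite (bigD1 x) //= eqxx big1 // => i; rewrite eq_sym => /negbTE ->. Qed.

Definition kleins : seq klein := [:: (0, 0); (0, 1); (1, 0); (1, 1)]%R.

Lemma mem_kleins (a : klein) : a \in kleins.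
Proof.
have Z2_cases (z : 'Z_2) : z = 0%R \/ z = 1%R.
  by case: z => [[|[|//]] ?]; [left | right]; apply: val_inj.
by case: a => x y; case: (Z2_cases x) => ->; case: (Z2_cases y) => ->.
Qed.

Lemma kleins_uniq : uniq kleins.
Proof. by vm_compute. Qed.

Lemma big_kleins (R : Type) (idx : R) (op : Monoid.com_law idx) (F : klein -> R) :
  \big[op/idx]_(a <- kleins) F a = \big[op/idx]_(a : klein) F a.
Proof.
rewrite -big_enum; apply/perm_big/uniq_perm; rewrite ?kleins_uniq ?enum_uniq //.
by move=> a; rewrite mem_kleins mem_enum.
Qed.

Lemma count_kleins (a : klein) : count_mem a kleins = 1.
Proof. by rewrite count_uniq_mem ?kleins_uniq ?mem_kleins. Qed.

Lemma sum_kleins : (\sum_(a <- kleins) a)%R = 0%R.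
Proof. by rewrite !big_cons big_nil; apply/eqP; vm_compute. Qed.

Definition balanced (f : klein -> nat) : Prop := forall a b, f a <= f b + 1.

Definition balancedb (f : klein -> nat) : bool :=
  let vs := map f kleins in all (fun x => all (fun y => x <= y + 1) vs) vs.

Lemma balancedP (f : klein -> nat) : reflect (balanced f) (balancedb f).
Proof.
rewrite /balancedb; cbv zeta; rewrite all_map.
apply: (iffP allP) => [f_bal a b | f_bal a _].
  by have /allP := f_bal a (mem_kleins a); apply; rewrite map_f ?mem_kleins.
by apply/allP => _ /mapP[b _ ->]; apply: f_bal.
Qed.

Lemma eq_balanced (f g : klein -> nat) : f =1 g -> balanced f -> balanced g.
Proof. by move=> fg f_bal a b; rewrite -!fg. Qed.

(* vc and ec are the vertex and edge counts of the old labeling, w lists the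
   labels of the new vertices and s is the label sum of the old vertices of
   the new edge. *)
Definition balanced_completion (vc ec : klein -> nat) (s : klein) (w : seq klein) :=
  balanced (fun a => vc a + count_mem a w) /\
  balanced (fun a => ec a + (s + \sum_(x <- w) x == a)%R).

(* N and M are the numbers of vertices and edges after the extension. *)
Definition extension_condition (N M k : nat) : bool :=
  [&& (N %% 4 == 0) ==> (M %% 4 == 1),
      (N %% 4 == 2) ==> (M %% 4 != 0)
    & (N %% 4 == 3) && (k == 2) ==> (M %% 4 != 0)].

Lemma extension_condition_offset (i j N M k : nat) :
  extension_condition (i * 4 + N) (j * 4 + M) k = extension_condition N M k.
Proof. by rewrite /extension_condition !modnMDl. Qed.

(* Balance and sum are invariant under permutation, so multisets suffice. *)
Definition completion_sums (S : seq klein) (k : nat) : seq klein :=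
  [seq foldr +%R 0%R w | w <- multisets kleins k
                       & balancedb (fun a => (a \in S) + count_mem a w)].

Lemma small_completions_exist :
  all (fun mS => all (fun k =>
      let S := mask mS kleins in let ys := completion_sums S k in
      all (fun mD => let D := mask mD kleins in all (fun s =>
        extension_condition (size S + k) (size D + 1) k ==>
        has (fun y => balancedb (fun a => (a \in D) + (s + y == a)%R)) ys)
      kleins) (words [:: false; true] 4))
    (iota 2 5)) (words [:: false; true] 4).
Proof. by vm_compute. Qed.

Lemma small_indicator_completion (P Q : pred klein) (s : klein) (k : nat) :
  2 <= k <= 6 ->
  extension_condition (count P kleins + k) (count Q kleins + 1) k ->
  exists2 w, size w = k & balanced_completion P Q s w.
Proof.
move=> k_bounds cond.
have mask_words (R : pred klein) : map R kleins \in words [:: false; true] 4.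
  by rewrite mem_words size_map; apply/allP => -[].
have mem_mask (R : pred klein) a : (a \in mask (map R kleins) kleins) = R a.
  by rewrite -filter_mask mem_filter mem_kleins andbT.
have k_iota : k \in iota 2 5 by rewrite mem_iota; lia.
move/allP/(_ _ (mask_words P))/allP/(_ _ k_iota): small_completions_exist.
move/allP/(_ _ (mask_words Q))/allP/(_ _ (mem_kleins s)).
rewrite -!filter_mask !size_filter cond => /hasP[y /mapP[w w_in ->]].
move: w_in; rewrite mem_filter => /andP[/balancedP w_vbal /multisets_size size_w].
move/balancedP => w_ebal.
exists w => //; split.
  by apply: eq_balanced w_vbal => a; rewrite filter_mask mem_mask.
by apply: eq_balanced w_ebal => a; rewrite filter_mask mem_mask foldrE.
Qed.

Lemma indicator_completion (P Q : pred klein) (s : klein) (k : nat) :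
  2 <= k ->
  extension_condition (count P kleins + k) (count Q kleins + 1) k ->
  exists2 w, size w = k & balanced_completion P Q s w.
Proof.
elim/ltn_ind: k => k IHk k_ge2 cond.
have [k_le6 | k_gt6] := leqP k 6.
  by apply: small_indicator_completion; rewrite ?k_ge2.
have [|||w size_w [w_vbal w_ebal]] := IHk (k - 4); [lia | lia | |].
  have N_mod : (count P kleins + k) %% 4 = (count P kleins + (k - 4)) %% 4 by lia.
  move: cond; rewrite /extension_condition N_mod => /and3P[-> -> _] /=.
  by rewrite (_ : k - 4 == 2 = false) ?andbF //; apply/eqP; lia.
exists (w ++ kleins); first by rewrite size_cat size_w /=; lia.
split=> a b.
  by rewrite !count_cat !count_kleins; have := w_vbal a b; lia.
by rewrite big_cat /= sum_kleins addr0; apply: w_ebal.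
Qed.

Lemma balanced_offset (f : klein -> nat) :
  balanced f -> exists (mu : nat) (P : pred klein), f =1 (fun a => mu + P a).
Proof.
move=> f_bal; have [a0 _ a0_min] := @arg_minnP _ (0, 0)%R xpredT f isT.
exists (f a0), (fun a => f a != f a0) => a.
by have := a0_min a isT; have := f_bal a a0; case: eqP => /=; lia.
Qed.

Lemma sum_offset (mu : nat) (P : pred klein) :
  \sum_(a : klein) (mu + P a) = mu * 4 + count P kleins.
Proof. by rewrite -big_kleins !big_cons big_nil /=; lia. Qed.

Lemma balanced_completion_exists (vc ec : klein -> nat) (s : klein) (k : nat) :
  balanced vc -> balanced ec -> 2 <= k ->
  extension_condition (\sum_a vc a + k) (\sum_a ec a + 1) k ->
  exists2 w, size w = k & balanced_completion vc ec s w.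
Proof.
move=> /balanced_offset[mu [P vcE]] /balanced_offset[nu [Q ecE]] k_ge2.
rewrite (eq_bigr _ (fun a _ => vcE a)) (eq_bigr _ (fun a _ => ecE a)) !sum_offset.
rewrite -(addnA (mu * 4)) -(addnA (nu * 4)) extension_condition_offset => cond.
have [w size_w [w_vbal w_ebal]] := indicator_completion s k_ge2 cond.
exists w => //; split=> a b; rewrite ?vcE ?ecE.
  by have := w_vbal a b; lia.
by have := w_ebal a b; lia.
Qed.

Section Labelings.

Variable T : finType.
Implicit Types (A D e : {set T}) (E : seq {set T}) (c : T -> klein).

Lemma vcountE A c a : vcount A c a = \sum_(v in A) (c v == a).
Proof.
rewrite /vcount -sum1_card (eq_bigl (fun v => (v \in A) && (c v == a))) => [|v].
  by rewrite big_mkcondr; apply: eq_bigr => v _; case: eqP.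
by rewrite inE.
Qed.

Lemma sum_vcount A c : \sum_a vcount A c a = #|A|.
Proof.
under eq_bigr do rewrite vcountE.
by rewrite exchange_big -sum1_card; apply: eq_bigr => v _; rewrite sum_eq_indicator.
Qed.

Lemma sum_ecount E c : \sum_a ecount E c a = size E.
Proof.
elim: E => [|e E IHE]; first by rewrite big1.
by rewrite big_split /= sum_eq_indicator IHE.
Qed.

Lemma vcount_setID A D c a : vcount A c a = vcount (A :&: D) c a + vcount (A :\: D) c a.
Proof. by rewrite !vcountE (big_setID D). Qed.

Lemma elabel_setID e D c : elabel c e = (elabel c (e :&: D) + elabel c (e :\: D))%R.
Proof. by rewrite /elabel (big_setID D). Qed.

Lemma eq_in_vcount A c c' a : {in A, c =1 c'} -> vcount A c a = vcount A c' a.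
Proof. by move=> cc'; rewrite !vcountE; apply: eq_bigr => v /cc' ->. Qed.

Lemma eq_in_elabel e c c' : {in e, c =1 c'} -> elabel c e = elabel c' e.
Proof. by move=> cc'; apply: eq_bigr => v /cc' ->. Qed.

Lemma eq_in_ecount E c c' a :
  {in E, forall e, {in e, c =1 c'}} -> ecount E c a = ecount E c' a.
Proof. by move=> cc'; apply: eq_in_count => e /cc' /eq_in_elabel /= ->. Qed.

Lemma vcount_enum D c a : vcount D c a = count_mem a (map c (enum D)).
Proof.
rewrite vcountE -big_enum -sum1_count big_map [RHS]big_mkcond /=.
by apply: eq_bigr => v _; case: eqP.
Qed.

Lemma elabel_enum D c : elabel c D = (\sum_(x <- map c (enum D)) x)%R.
Proof. by rewrite big_map big_enum. Qed.

Lemma ecount_rcons E e c a : ecount (rcons E e) c a = ecount E c a + (elabel c e == a).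
Proof. by rewrite /ecount -cats1 count_cat /= addn0. Qed.

Lemma extend_labeling (R : Type) (c' : T -> R) D (w : seq R) :
  size w = #|D| -> exists2 c : T -> R, {in ~: D, c =1 c'} & map c (enum D) = w.
Proof.
move=> size_w.
exists (fun v => if v \in D then nth (c' v) w (index v (enum D)) else c' v).
  by move=> v; rewrite inE => /negbTE ->.
have := enum_uniq (mem D); rewrite cardE in size_w.
case Es: (enum D) size_w => [|y0 s] size_w D_uniq; first by case: w size_w.
rewrite -Es in size_w D_uniq *.
apply: (@eq_from_nth _ (c' y0)); first by rewrite size_map.
move=> i; rewrite size_map => i_lt.
rewrite (nth_map y0) // -mem_enum mem_nth // index_uniq //.
by rewrite (set_nth_default (c' y0)) // size_w.
Qed.

End Labelings.

Theorem theorem2 (T : finType) (es : seq {set T}) (em : {set T}) :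
  let E := rcons es em in
  let m := (size es).+1 in
  let V := \bigcup_(e <- E) e in
  let emm := em :\: \bigcup_(e <- es) e in
  uniq E ->
  (forall e, e \in E -> 2 <= #|e|) ->
  2 <= #|emm| ->
  (#|V| %% 4 = 0 -> m %% 4 = 1) ->
  (#|V| %% 4 = 2 -> m %% 4 <> 0) ->
  (#|V| %% 4 = 3 -> #|emm| = 2 -> m %% 4 <> 0) ->
  cordial (V :\: emm) es -> cordial V E.
Proof.
move=> E m V emm _ _ k_ge2 cond0 cond2 cond3 [c' [c'_friendly c'_cordial]].
set U := \bigcup_(e <- es) e.
have V_def : V = U :|: em by rewrite /V /E big_rcons.
have [VIU VDU VDemm] : [/\ V :&: U = U, V :\: U = emm & V :\: emm = U].
  by split; apply/setP => v; rewrite V_def !inE; case: (v \in U) (v \in em) => [] [].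
rewrite VDemm in c'_friendly.
have cond : extension_condition (\sum_a vcount U c' a + #|emm|)
                                (\sum_a ecount es c' a + 1) #|emm|.
  have card_V : #|U| + #|emm| = #|V| by rewrite -{1}VIU -VDU cardsID.
  rewrite sum_vcount sum_ecount addn1 card_V.
  apply/and3P; split; apply/implyP.
  - by move=> /eqP/cond0/eqP.
  - by move=> /eqP/cond2/eqP.
  - by case/andP => /eqP V3 /eqP k2; apply/eqP; exact: cond3.
have [w size_w [w_vbal w_ebal]] :=
  balanced_completion_exists (elabel c' (em :&: U)) c'_friendly c'_cordial k_ge2 cond.
have [c c_out c_emm] := extend_labeling c' size_w.
have c_U : {in U, c =1 c'} by move=> v v_U; apply: c_out; rewrite !inE v_U.
exists c; split=> a b.
  rewrite !(vcount_setID V U) VIU VDU !(vcount_enum emm) c_emm !(eq_in_vcount _ c_U).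
  exact: w_vbal.
have es_c : {in es, forall e : {set T}, {in e, c =1 c'}}.
  by move=> e e_es v v_e; apply: c_U; rewrite /U bigcup_seq; apply/bigcupP; exists e.
have emU_c : {in em :&: U, c =1 c'} by move=> v /setIP[_ /c_U].
rewrite /E !ecount_rcons !(eq_in_ecount _ es_c) (elabel_setID em U) (eq_in_elabel emU_c).
by rewrite (elabel_enum emm) c_emm; apply: w_ebal.
Qed.
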